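(* Let $f$ be a DNF with $k$ terms and let $y\in\{0,1\}^n$ satisfy $f_{>\tau}$ and not $f_{\le\tau}$ ($\tau=1000k$). Fix any permutation $\pi$ and let $z_0,z_1,\dots$ be the sequence of the sweep process started at $y$. If $i\ge 1$ is such that $(z_i)_a=y_a$ for all $a\in P(y)$, then $\mathcal{T}_f(z_i)\subseteq\mathcal{T}_f(z_{i-1})$.
   Context: Terms are sets of literals, a DNF is a set of terms; $g_{\le L}$ / $g_{>L}$ are the sub-DNFs of terms of length $\le L$ / $>L$. For $x\in\{0,1\}^n$, $\mathcal{T}_f(x)$ is the set of terms of $f$ satisfied by $x$. Protected set: for each term $T\in f$ not satisfied by $y$, take the literal of $T$ with the smallest index $i\in[n]$ that $y$ does not satisfy; $P(y)\subseteq[n]$ is the set of all these indices. Sweep process: given $y$ with $f(y)=1$ and a permutation $\pi$ listing the indices of $[n]$ as $\pi(0),\pi(1),\dots,\pi(n-1)$, set $z_0=y$ and for each $i$, $z_{i+1}=z_i^{\oplus\pi(i)}$ if $f(z_i^{\oplus\pi(i)})=1$ and $z_{i+1}=z_i$ otherwise, where $x^{\oplus j}$ denotes $x$ with bit $j$ flipped. *)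

From mathcomp Require Import all_boot all_fingroup.
Set Implicit Arguments. Unset Strict Implicit. Unset Printing Implicit Defensive.

(* A literal over variables 'I_n: (i, b) means "x_i = b" (b = true: x_i, b = false: ~x_i). *)
Definition literal (n : nat) := ('I_n * bool)%type.
Definition term (n : nat) := {set literal n}.
Definition dnf (n : nat) := {set term n}.
Definition point (n : nat) := {ffun 'I_n -> bool}.

Definition lit_sat n (l : literal n) (x : point n) : bool := x l.1 == l.2.
Definition term_sat n (T : term n) (x : point n) : bool :=
  [forall l in T, lit_sat l x].
Definition dnf_eval n (f : dnf n) (x : point n) : bool :=
  [exists T in f, term_sat T x].

Definition term_len n (T : term n) : nat := #|T|.
Definition dnf_le n (g : dnf n) (L : nat) : dnf n := [set T in g | term_len T <= L].
Definition dnf_gt n (g : dnf n) (L : nat) : dnf n := [set T in g | L < term_len T].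

Definition sat_terms n (f : dnf n) (x : point n) : {set term n} :=
  [set T in f | term_sat T x].

Definition protected n (f : dnf n) (y : point n) : {set 'I_n} :=
  [set i : 'I_n | [exists T in f, ~~ term_sat T y &&
     [exists l in T, (l.1 == i) && ~~ lit_sat l y] &&
     [forall l in T, ~~ lit_sat l y ==> (i <= l.1)]]].

Definition flip n (x : point n) (j : 'I_n) : point n :=
  [ffun a => if a == j then ~~ x a else x a].

(* The sweep process: z_0 = y, z_{i+1} = z_i^{(+)pi(i)} if f of it is 1, else z_i
   (for i < n; after the n steps the sequence is constant, but only i <= n is used). *)
Fixpoint sweep n (f : dnf n) (y : point n) (pi : {perm 'I_n}) (i : nat) : point n :=
  match i with
  | 0 => y
  | m.+1 =>
      let z := sweep f y pi m in
      if insub m is Some j then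
        (if dnf_eval f (flip z (pi j)) then flip z (pi j) else z)
      else z
  end.

From mathcomp Require Import all_boot all_fingroup.

Set Implicit Arguments.
Unset Strict Implicit.
Unset Printing Implicit Defensive.

(* A term satisfied by [z_i] is satisfied by [y]: otherwise its protected index
   is a literal falsified by [y], and [z_i] still agrees with [y] there. Moreover
   [z_(i-1)] differs from [z_i] at most in bit [pi (i-1)], which no earlier step
   has touched, so [z_(i-1)] takes every bit from [z_i] or from [y] and satisfies
   every term that both satisfy. *)

Lemma term_sat_mix n (T : term n) (x y z : point n) :
  (forall a, z a = x a \/ z a = y a) ->
  term_sat T x -> term_sat T y -> term_sat T z.
Proof.
move=> zxy /forallP Tx /forallP Ty; apply/forallP => l; apply/implyP => lT.
rewrite /lit_sat; case: (zxy l.1) => ->; [exact: implyP (Tx l) lT | exact: implyP (Ty l) lT].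
Qed.

Section Protected.

Variables (n : nat) (f : dnf n) (y : point n).

Lemma protected_min_unsat (T : term n) (l : literal n) :
  T \in f -> l \in T -> ~~ lit_sat l y ->
  (forall l', l' \in T -> ~~ lit_sat l' y -> l.1 <= l'.1) ->
  l.1 \in protected f y.
Proof.
move=> Tf lT ly lmin; rewrite inE; apply/existsP; exists T.
rewrite Tf /=; apply/andP; split; first (apply/andP; split).
- by rewrite /term_sat negb_forall; apply/existsP; exists l; rewrite negb_imply lT.
- by apply/existsP; exists l; rewrite lT eqxx.
- by apply/forallP => l'; apply/implyP => l'T; apply/implyP; exact: lmin.
Qed.

Lemma term_sat_protected (T : term n) (x : point n) :
  T \in f -> {in protected f y, x =1 y} -> term_sat T x -> term_sat T y.
Proof.
move=> Tf xy /forallP Tx; apply/forallP => l0; apply/implyP => l0T; apply/negPn/negP => l0y.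
have [l /andP[lT ly] lmin] :=
  @arg_minnP _ l0 (fun l => (l \in T) && ~~ lit_sat l y) (fun l => val l.1) (introT andP (conj l0T l0y)).
have lP : l.1 \in protected f y.
  by apply: (protected_min_unsat Tf lT ly) => l' l'T l'y; apply: lmin; rewrite l'T.
by move: ly (implyP (Tx l) lT); rewrite /lit_sat xy // => /negbTE ->.
Qed.

Lemma sat_terms_protected (x : point n) :
  {in protected f y, x =1 y} -> sat_terms f x \subset sat_terms f y.
Proof.
move=> xy; apply/subsetP => T; rewrite !inE => /andP[Tf Tx].
by rewrite Tf (term_sat_protected Tf xy Tx).
Qed.

End Protected.

Section Sweep.

Variables (n : nat) (f : dnf n) (y : point n) (pi : {perm 'I_n}).

Lemma sweepS (j : 'I_n) :
  sweep f y pi j.+1 =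
  (if dnf_eval f (flip (sweep f y pi j) (pi j)) then flip (sweep f y pi j) (pi j)
   else sweep f y pi j).
Proof. by rewrite /=; case: insubP => [j' _ /val_inj -> | ]; rewrite ?ltn_ord. Qed.

Lemma sweepS_neq (j : 'I_n) (a : 'I_n) :
  a != pi j -> sweep f y pi j.+1 a = sweep f y pi j a.
Proof. by move=> a_j; rewrite sweepS; case: ifP; rewrite ?ffunE ?(negbTE a_j). Qed.

Lemma sweep_unvisited (m : nat) (a : 'I_n) :
  (forall j : 'I_n, j < m -> pi j != a) -> sweep f y pi m a = y a.
Proof.
elim: m => [//|m IH] unvisited.
have IHm : sweep f y pi m a = y a by apply: IH => j /ltnW; exact: unvisited.
have [m_lt_n | m_ge_n] := ltnP m n; last first.
  by rewrite /= insubN -?leqNgt.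
have := unvisited (Ordinal m_lt_n) (ltnSn m); rewrite eq_sym => a_m.
by rewrite (sweepS_neq a_m).
Qed.

Lemma sweep_before_visit (j : 'I_n) : sweep f y pi j (pi j) = y (pi j).
Proof. by apply: sweep_unvisited => j' lt_j'j; rewrite (inj_eq perm_inj) neq_ltn lt_j'j. Qed.

End Sweep.

Theorem lemma4p4 (n k : nat) (f : dnf n) (y : point n) (pi : {perm 'I_n}) (i : nat) :
  #|f| = k ->
  dnf_eval (dnf_gt f (1000 * k)) y ->
  ~~ dnf_eval (dnf_le f (1000 * k)) y ->
  1 <= i <= n ->
  (forall a, a \in protected f y -> sweep f y pi i a = y a) ->
  sat_terms f (sweep f y pi i) \subset sat_terms f (sweep f y pi i.-1).
Proof.
move=> _ _ _ /andP[]; case: i => [//|m] _ m_lt_n zy.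
pose j : 'I_n := Ordinal m_lt_n.
have mix a : sweep f y pi m a = sweep f y pi m.+1 a \/ sweep f y pi m a = y a.
  have [-> | a_j] := eqVneq a (pi j); first by right; exact: sweep_before_visit.
  by left; rewrite (sweepS_neq f y a_j).
apply/subsetP => T T_zi; have /setIdP[_ Ty] := subsetP (sat_terms_protected zy) T T_zi.
move: T_zi => /setIdP[Tf Tz]; by rewrite inE Tf (term_sat_mix mix Tz Ty).
Qed.
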